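(* Let $\Omega\subseteq\mathbb{R}^n$ be open. A function $f\in\mathbb{A}(\Omega)$ is D-continuous if and only if $G(f)=f$, where $G(f)=[I(S(I(f))),S(I(S(f)))]$.
   Context: $\overline{\mathbb{R}}=\mathbb{R}\cup\{\pm\infty\}$, $\mathbb{I}\overline{\mathbb{R}}$ is the set of closed intervals $[\underline a,\overline a]$ with $\underline a\le\overline a$ in $\overline{\mathbb{R}}$, $a\in\overline{\mathbb{R}}$ identified with $[a,a]$. $\mathbb{A}(X)$ is the set of functions $X\to\mathbb{I}\overline{\mathbb{R}}$. $B_\delta(x)=\{y\in\Omega:\|x-y\|<\delta\}$. For dense $D\subseteq\Omega$ and $f\in\mathbb{A}(D)$: $I(D,\Omega,f)(x)=\sup_{\delta>0}\inf\{z\in f(y):y\in B_\delta(x)\cap D\}$, $S(D,\Omega,f)(x)=\inf_{\delta>0}\sup\{z\in f(y):y\in B_\delta(x)\cap D\}$, $F(D,\Omega,f)(x)=[I(D,\Omega,f)(x),S(D,\Omega,f)(x)]$; when $D=\Omega$ write $I(f),S(f)$. $f\in\mathbb{A}(\Omega)$ is D-continuous if $F(D,\Omega,f)=f$ for every dense subset $D$ of $\Omega$ (using the restriction of $f$ to $D$). *)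

From HB Require Import structures.
From mathcomp Require Import all_boot all_order all_algebra.
From mathcomp Require Import all_classical all_reals all_analysis.
Set Implicit Arguments. Unset Strict Implicit. Unset Printing Implicit Defensive.
Import Order.TTheory GRing.Theory Num.Theory.
Import numFieldNormedType.Exports.
Local Open Scope classical_set_scope.
Local Open Scope ring_scope.

(* An element of I(\bar R) is represented by the pair (lower, upper) of
   extended reals; a function in A(Omega) is f : 'rV[R]_n -> \bar R * \bar R,
   considered on Omega, with (f x).1 <= (f x).2 for x in Omega. *)

Section Defs.
Variables (R : realType) (n : nat).
Local Notation pt := 'rV[R]_n.

Definition vals (Om D : set pt) (f : pt -> \bar R * \bar R) (x : pt) (d : R)
  : set (\bar R) :=
  [set z | exists2 y, (Om y /\ D y /\ `|x - y| < d) &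
                      (((f y).1 <= z)%E /\ (z <= (f y).2)%E)].

Definition IopD (Om D : set pt) (f : pt -> \bar R * \bar R) (x : pt) : \bar R :=
  ereal_sup [set ereal_inf (vals Om D f x d) | d in [set d : R | 0 < d]].

Definition SopD (Om D : set pt) (f : pt -> \bar R * \bar R) (x : pt) : \bar R :=
  ereal_inf [set ereal_sup (vals Om D f x d) | d in [set d : R | 0 < d]].

Definition FopD (Om D : set pt) (f : pt -> \bar R * \bar R) (x : pt)
  : \bar R * \bar R := (IopD Om D f x, SopD Om D f x).

Definition Iop (Om : set pt) f := IopD Om Om f.
Definition Sop (Om : set pt) f := SopD Om Om f.

Definition degen (g : pt -> \bar R) : pt -> \bar R * \bar R := fun x => (g x, g x).

Definition dense_in (Om D : set pt) : Prop := D `<=` Om /\ Om `<=` closure D.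

Definition D_continuous (Om : set pt) (f : pt -> \bar R * \bar R) : Prop :=
  forall D, dense_in Om D -> forall x, Om x -> FopD Om D f x = f x.

Definition Gop (Om : set pt) (f : pt -> \bar R * \bar R) (x : pt)
  : \bar R * \bar R :=
  (Iop Om (degen (Sop Om (degen (Iop Om f)))) x,
   Sop Om (degen (Iop Om (degen (Sop Om f)))) x).

End Defs.

From HB Require Import structures.
From mathcomp Require Import all_boot all_order all_algebra.
From mathcomp Require Import all_classical all_reals all_analysis.
Import Order.TTheory GRing.Theory Num.Theory.
Import numFieldNormedType.Exports.
Local Open Scope classical_set_scope.
Local Open Scope ring_scope.

(* Only the lower envelope I f enters the lower bound of G(f), and D-continuity
   of the lower bound is equivalent to I(S(I f)) = f.1 on Omega.  If
   I(S(I f))(x) > r > f.1(x), then S(I f) > r near x, so the points where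
   I f >= r are dense near x, and along that dense set the lower envelope at x
   is at least r.  Conversely, for D dense, every point y near x has points of D
   arbitrarily close, so the infimum of f.1 over D near x lies below S(I f)(y);
   hence I_D f <= I(S(I f)) = f.1, while I_D f >= I f = f.1 holds for any D.
   The upper bound reduces to the lower one through f |-> -f, which exchanges
   I and S. *)

Lemma lte_dense (R : realFieldType) (a b : \bar R) :
  (a < b)%E -> exists2 c, (a < c)%E & (c < b)%E.
Proof.
case: a => [a||]; case: b => [b||] //=.
- by rewrite lte_fin => ab; exists ((a + b) / 2)%:E; rewrite lte_fin ?midf_lt.
- by move=> _; exists (a + 1)%:E; rewrite ?ltry // lte_fin ltrDl ltr01.
- by move=> _; exists (b - 1)%:E; rewrite ?ltNyr // lte_fin gtrDl oppr_lt0 ltr01.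
- by move=> _; exists 0%:E; rewrite ?ltNy0 ?lt0y.
Qed.

Lemma normB_lt_split {R : numDomainType} {V : normedZmodType R} {x y z : V} {d : R} :
  `|x - y| < d -> `|y - z| < d - `|x - y| -> `|x - z| < d.
Proof. by move=> _ yz; apply: le_lt_trans (ler_distD y x z) _; rewrite -ltrBrDl. Qed.

Section Envelopes.
Set Implicit Arguments. Unset Strict Implicit.
Variables (R : realType) (n : nat).
Local Notation pt := 'rV[R]_n.
Implicit Types (Om D : set pt) (f : pt -> \bar R * \bar R) (g : pt -> \bar R).
Implicit Types (x y z : pt) (c : \bar R).

Definition interval_on Om f := forall y, Om y -> ((f y).1 <= (f y).2)%E.

Lemma dense_in_refl Om : dense_in Om Om.
Proof. by split=> //; apply: subset_closure. Qed.

Lemma ereal_inf_vals_lbound Om D f x d y : Om y -> D y -> `|x - y| < d ->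
  ((f y).1 <= (f y).2)%E -> (ereal_inf (vals Om D f x d) <= (f y).1)%E.
Proof. by move=> Oy Dy xy fy; apply: ereal_inf_lbound; exists y. Qed.

Lemma ereal_inf_vals_ge Om D f x d c :
  (forall y, Om y -> D y -> `|x - y| < d -> (c <= (f y).1)%E) ->
  (c <= ereal_inf (vals Om D f x d))%E.
Proof.
move=> cf; apply: le_ereal_inf_tmp => t [y [Oy [Dy xy]] [ft _]].
exact: le_trans (cf y Oy Dy xy) ft.
Qed.

Lemma IopD_ge Om D f x d c : 0 < d ->
  (c <= ereal_inf (vals Om D f x d))%E -> (c <= IopD Om D f x)%E.
Proof. by move=> d0 /le_trans; apply; apply: ereal_sup_ubound; exists d. Qed.

Lemma IopD_le Om D f x c :
  (forall d, 0 < d -> (ereal_inf (vals Om D f x d) <= c)%E) ->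
  (IopD Om D f x <= c)%E.
Proof. by move=> fc; apply: ge_ereal_sup => _ [d d0 <-]; exact: fc. Qed.

Lemma IopD_le_self Om D f x : Om x -> D x -> ((f x).1 <= (f x).2)%E ->
  (IopD Om D f x <= (f x).1)%E.
Proof.
move=> Ox Dx fx; apply: IopD_le => d d0.
by apply: ereal_inf_vals_lbound; rewrite ?subrr ?normr0.
Qed.

Lemma IopD_subset Om D D' f x : D `<=` D' ->
  (IopD Om D' f x <= IopD Om D f x)%E.
Proof.
move=> DD'; apply: IopD_le => d d0; apply: (IopD_ge d0).
apply: le_ereal_inf => t [y [Oy [Dy xy]] ft].
by exists y => //; split=> //; split=> //; apply: DD'.
Qed.

Lemma le_IopD Om D f f' x : interval_on Om f ->
  (forall y, Om y -> ((f y).1 <= (f' y).1)%E) ->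
  (IopD Om D f x <= IopD Om D f' x)%E.
Proof.
move=> fI ff'; apply: IopD_le => d d0; apply: (IopD_ge d0).
apply: ereal_inf_vals_ge => y Oy Dy xy; apply: le_trans (ff' y Oy).
exact: ereal_inf_vals_lbound (fI y Oy).
Qed.

Lemma eq_IopD Om D f f' x : interval_on Om f -> interval_on Om f' ->
  (forall y, Om y -> (f y).1 = (f' y).1) -> IopD Om D f x = IopD Om D f' x.
Proof.
by move=> fI f'I ff'; apply/le_anti; rewrite !le_IopD // => y /ff' ->.
Qed.

Lemma Iop_idem Om f x : Om x -> interval_on Om f ->
  Iop Om (degen (Iop Om f)) x = Iop Om f x.
Proof.
move=> Ox fI; apply/le_anti; rewrite IopD_le_self //=.
apply: ge_ereal_sup => _ [d d0 <-]; apply: (IopD_ge d0).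
apply: ereal_inf_vals_ge => y Oy _ xy /=.
have d'0 : 0 < d - `|x - y| by rewrite subr_gt0.
apply: (IopD_ge d'0); apply: le_ereal_inf => t [z [Oz [_ yz]] zt].
by exists z => //; split=> //; split=> //; apply: normB_lt_split yz.
Qed.

Lemma Sop_degen_ge Om g y : Om y -> (g y <= Sop Om (degen g) y)%E.
Proof.
move=> Oy; apply: le_ereal_inf_tmp => _ [e e0 <-].
by apply: ereal_sup_ubound; exists y; rewrite ?subrr ?normr0.
Qed.

Definition lower_D_continuous Om f :=
  forall D, dense_in Om D -> forall x, Om x -> IopD Om D f x = (f x).1.

Lemma dense_superlevel Om g x d r :
  (forall y, Om y -> `|x - y| < d -> (r < Sop Om (degen g) y)%E) ->
  dense_in Om [set y | Om y /\ (`|x - y| < d -> (r <= g y)%E)].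
Proof.
move=> rS; split=> [y [] //|y Oy B /nbhs_ballP[e /= e0 eB]].
have [xy|xy] := pselect (`|x - y| < d); last first.
  by exists y; split; [split=> // /xy | apply: eB; apply: ballxx].
set e' := Num.min e (d - `|x - y|).
have e'0 : 0 < e' by rewrite lt_min e0 subr_gt0.
have /ereal_sup_gt[t [z [Oz [_ yz]] [_ zt]] rt] :
    (r < ereal_sup (vals Om Om (degen g) y e'))%E.
  by apply: lt_le_trans (rS y Oy xy) _; apply: ereal_inf_lbound; exists e'.
move: yz; rewrite lt_min => /andP[yze yzd].
exists z; split; first by split=> // _; apply/ltW/(lt_le_trans rt).
by apply: eB; rewrite -ball_normE.
Qed.

Lemma lower_D_continuous_Gop Om f : interval_on Om f ->
  lower_D_continuous Om f -> forall x, Om x -> (Gop Om f x).1 = (f x).1.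
Proof.
move=> fI fC x Ox /=.
have IfE y : Om y -> Iop Om f y = (f y).1 by apply: fC; apply: dense_in_refl.
apply/le_anti/andP; split; last first.
  rewrite -IfE // -(Iop_idem Ox fI); apply: le_IopD => // y Oy.
  exact: Sop_degen_ge.
rewrite leNgt; apply/negP => /ereal_sup_gt[_ [d d0 <-] /lte_dense[r fxr rS]].
have rSy y : Om y -> `|x - y| < d -> (r < Sop Om (degen (Iop Om f)) y)%E.
  by move=> Oy xy; apply: lt_le_trans rS _; apply: ereal_inf_vals_lbound.
have := fC _ (dense_superlevel rSy) x Ox => fxE.
suff : (r <= (f x).1)%E by rewrite leNgt fxr.
rewrite -fxE; apply: (IopD_ge d0); apply: ereal_inf_vals_ge => y Oy [_ ry] xy.
by rewrite -IfE //; apply: ry.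
Qed.

Lemma IopD_le_Iop_Sop Om D f g x : interval_on Om f -> dense_in Om D ->
  (forall z, D z -> ((f z).1 <= g z)%E) ->
  (IopD Om D f x <= Iop Om (degen (Sop Om (degen g))) x)%E.
Proof.
move=> fI [DOm Dd] fg; apply: IopD_le => d d0.
apply: le_trans (IopD_ge d0 (lexx _)).
apply: le_ereal_inf_tmp => t [y [Oy [_ xy]] [yt _]]; apply: le_trans yt.
apply: le_ereal_inf_tmp => _ [e e0 <-].
have e'0 : 0 < Num.min e (d - `|x - y|) by rewrite lt_min e0 subr_gt0.
have [z [Dz /=]] := Dd y Oy _ (nbhsx_ballx y _ e'0).
rewrite -ball_normE /= lt_min => /andP[yze yzd].
have Oz := DOm z Dz.
apply: le_trans (ereal_inf_vals_lbound Oz Dz (normB_lt_split xy yzd) (fI z Oz)) _.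
apply: le_trans (fg z Dz) _.
by apply: ereal_sup_ubound; exists z.
Qed.

Lemma Gop_lower_D_continuous Om f : interval_on Om f ->
  (forall x, Om x -> (Gop Om f x).1 = (f x).1) -> lower_D_continuous Om f.
Proof.
move=> fI fG D DOm x Ox.
have IfE y : Om y -> Iop Om f y = (f y).1.
  move=> Oy; rewrite -[RHS](fG y Oy) /= -[RHS]Iop_idem //.
  by apply: eq_IopD => // z Oz; rewrite -(fG z Oz).
apply/le_anti/andP; split; last by rewrite -IfE //; apply: IopD_subset DOm.1.
rewrite -[X in (_ <= X)%E](fG x Ox).
by apply: IopD_le_Iop_Sop => // z Dz; rewrite IfE //; apply: DOm.1.
Qed.

Lemma lower_D_continuousP Om f : interval_on Om f ->
  lower_D_continuous Om f <-> (forall x, Om x -> (Gop Om f x).1 = (f x).1).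
Proof.
by move=> fI; split; [apply: lower_D_continuous_Gop | apply: Gop_lower_D_continuous].
Qed.

Definition ineg f : pt -> \bar R * \bar R := fun y => (- (f y).2, - (f y).1)%E.

Lemma inegK : involutive ineg.
Proof. by move=> f; apply: funext => y; rewrite /ineg /= !oppeK; case: (f y). Qed.

Lemma interval_on_ineg Om f : interval_on Om f -> interval_on Om (ineg f).
Proof. by move=> fI y Oy; rewrite leeN2; apply: fI. Qed.

Lemma ineg_degen g : ineg (degen g) = degen (fun y => - g y)%E.
Proof. by []. Qed.

Lemma vals_ineg Om D f x d : vals Om D (ineg f) x d = -%E @` vals Om D f x d.
Proof.
apply/seteqP; split=> t.
  move=> [y Dy [ft tf]]; exists (- t)%E; last by rewrite oppeK.
  by exists y => //; rewrite leeNr leeNl.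
by move=> [s [y Dy [fs sf]] <-]; exists y => //; rewrite !leeN2.
Qed.

Lemma SopD_ineg Om D f : SopD Om D f = fun x => (- IopD Om D (ineg f) x)%E.
Proof.
apply: funext => x; rewrite /IopD /SopD -[LHS]oppeK -ereal_supN; congr (- _)%E.
congr ereal_sup; apply/seteqP; split=> t.
  by move=> [s [d d0 <-] <-]; exists d; rewrite // vals_ineg ereal_infN.
move=> [d d0 <-]; rewrite vals_ineg ereal_infN.
by exists (ereal_sup (vals Om D f x d)) => //; exists d.
Qed.

Lemma IopD_ineg Om D f : IopD Om D f = fun x => (- SopD Om D (ineg f) x)%E.
Proof. by apply: funext => x; rewrite SopD_ineg inegK oppeK. Qed.

Lemma Gop_ineg Om f x : (Gop Om f x).2 = (- (Gop Om (ineg f) x).1)%E.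
Proof.
rewrite /= /Sop [in LHS]SopD_ineg ineg_degen; congr (- IopD _ _ (degen _) x)%E.
apply: funext => y; rewrite [in RHS]SopD_ineg ineg_degen; congr (- _)%E.
by congr (IopD _ _ (degen _) y); rewrite SopD_ineg.
Qed.

Lemma D_continuousE Om f :
  D_continuous Om f <-> lower_D_continuous Om f /\ lower_D_continuous Om (ineg f).
Proof.
split=> [fC|[fC fnC] D DOm x Ox].
  split=> D DOm x Ox; first by rewrite -(fC D DOm x Ox).
  by rewrite IopD_ineg inegK /= -(fC D DOm x Ox).
by apply: injective_projections; rewrite /= ?fC // SopD_ineg fnC //= oppeK.
Qed.

Lemma Gop_fixedE Om f :
  (forall x, Om x -> Gop Om f x = f x) <->
  (forall x, Om x -> (Gop Om f x).1 = (f x).1) /\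
  (forall x, Om x -> (Gop Om (ineg f) x).1 = (ineg f x).1).
Proof.
split=> [fG|[fG fnG] x Ox].
  split=> x Ox; first by rewrite fG.
  by apply: oppe_inj; rewrite -Gop_ineg fG //= oppeK.
by apply: injective_projections; rewrite ?fG // Gop_ineg fnG //= oppeK.
Qed.

End Envelopes.

Theorem theorem13 (R : realType) (n : nat) (Om : set 'rV[R]_n)
  (f : 'rV[R]_n -> \bar R * \bar R) :
  open Om ->
  (forall x, Om x -> ((f x).1 <= (f x).2)%E) ->
  (D_continuous Om f <-> (forall x, Om x -> Gop Om f x = f x)).
Proof.
move=> _ fI; have fnI := interval_on_ineg fI.
rewrite D_continuousE Gop_fixedE.
by rewrite (lower_D_continuousP fI) (lower_D_continuousP fnI).
Qed.
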